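(* For all integers $m,n\ge 2$, \[ a(m+n-2)\le \tfrac{1}{6}\,a(m)\,a(n). \] Consequently, for every $n\ge 3$, \[ s\le \left(\frac{a(n)}{6}\right)^{\frac{1}{n-2}}. \]
   Context: Let $\Sigma=\{0,1,2\}$. A word is a finite string of letters from $\Sigma$, and its length is its number of letters. A word $w$ is square-free if it cannot be written as $w=xyyz$ with words $x,y,z$ and $y$ nonempty. $\mathcal{A}(n)$ denotes the set of square-free words of length $n$ over $\Sigma$, and $a(n)=|\mathcal{A}(n)|$. The limit $s=\lim_{n\to\infty}a(n)^{1/n}$ exists; it is the growth rate of ternary square-free words. *)

From HB Require Import structures.
From mathcomp Require Import all_boot all_order all_algebra.
From mathcomp Require Import all_classical all_reals all_analysis.
Set Implicit Arguments. Unset Strict Implicit. Unset Printing Implicit Defensive.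
Import Order.TTheory GRing.Theory Num.Theory.

Definition Sigma := 'I_3.

Definition squarefree (w : seq Sigma) : Prop :=
  ~ exists x y z : seq Sigma, y <> [::] /\ w = x ++ y ++ y ++ z.

Definition A (n : nat) : {set n.-tuple Sigma} :=
  [set w : n.-tuple Sigma | `[< squarefree (tval w) >]].

Definition a (n : nat) : nat := #|A n|.

(** Permuting the letters of a square-free word keeps it square-free, so for
    n >= 2 the six possible two-letter prefixes (distinct letters) are equally
    frequent: a(n) = 6 c(n), where c(n) counts square-free words of length n
    with a fixed prefix.  A square-free word of length m + n - 2 is determined
    by its prefix of length m and its suffix of length n, which overlap in two
    letters fixed by the prefix; hence a(m + n - 2) <= a(m) c(n) = a(m) a(n) / 6.
    Consequently b(k) = a(k + 2) / 6 is submultiplicative, so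
    a(q d + 2) <= 6 b(d)^q, and a k-th root limit s > b(d)^(1/d) would make
    a(k) eventually exceed t^k for some t with t^d > b(d), which the geometric
    bound forbids. *)

From HB Require Import structures.
From mathcomp Require Import all_boot all_order all_algebra fingroup perm.
From mathcomp Require Import all_classical all_reals all_analysis.
From mathcomp Require Import zify lra.
Set Implicit Arguments. Unset Strict Implicit. Unset Printing Implicit Defensive.
Import Order.TTheory GRing.Theory Num.Theory.
Import numFieldNormedType.Exports.

Lemma perm_pair (T : finType) (x y x' y' : T) : x != y -> x' != y' ->
  exists s : {perm T}, s x = x' /\ s y = y'.
Proof.
move=> xy x'y'; pose s1 := tperm x x'; exists (s1 * tperm (s1 y) y')%g.
rewrite !permM tpermL; split=> //; rewrite /s1 tpermL tpermD // eq_sym //.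
by rewrite -{1}(tpermL x x') (inj_eq perm_inj).
Qed.

Lemma squarefree_catl (u v : seq Sigma) : squarefree (u ++ v) -> squarefree u.
Proof.
move=> sq [x [y [z [y0 Eu]]]]; apply: sq; exists x, y, (z ++ v).
by rewrite Eu -!catA.
Qed.

Lemma squarefree_catr (u v : seq Sigma) : squarefree (u ++ v) -> squarefree v.
Proof.
move=> sq [x [y [z [y0 Ev]]]]; apply: sq; exists (u ++ x), y, z.
by rewrite Ev catA.
Qed.

Lemma squarefree_take k (w : seq Sigma) : squarefree w -> squarefree (take k w).
Proof. by rewrite -{1}(cat_take_drop k w); apply: squarefree_catl. Qed.

Lemma squarefree_drop k (w : seq Sigma) : squarefree w -> squarefree (drop k w).
Proof. by rewrite -{1}(cat_take_drop k w); apply: squarefree_catr. Qed.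

Lemma squarefree_perm (s : {perm Sigma}) (w : seq Sigma) :
  squarefree w -> squarefree (map s w).
Proof.
move=> sq [x [y [z [y0 Ew]]]]; apply: sq.
exists (map s^-1%g x), (map s^-1%g y), (map s^-1%g z); split; first by case: y y0 {Ew}.
by rewrite -!map_cat -Ew mapK //; apply: permK.
Qed.

Lemma squarefree_nth_neq (w : seq Sigma) i : squarefree w -> i.+1 < size w ->
  nth ord0 w i != nth ord0 w i.+1.
Proof.
move=> sq lt_i; apply/eqP => Ei; apply: sq.
exists (take i w), [:: nth ord0 w i], (drop i.+2 w); split=> //.
rewrite -{1}(cat_take_drop i w); congr (_ ++ _).
by rewrite (drop_nth ord0) ?(ltnW lt_i) // (drop_nth ord0) // Ei.
Qed.

Definition head2 (w : seq Sigma) : Sigma * Sigma := (nth ord0 w 0, nth ord0 w 1).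

Definition A_head n (p : Sigma * Sigma) : {set n.-tuple Sigma} :=
  [set w in A n | head2 w == p].

Lemma card_A_head_le n p q : (1 < n)%N -> p.1 != p.2 -> q.1 != q.2 ->
  (#|A_head n p| <= #|A_head n q|)%N.
Proof.
move=> n_gt1 /(@perm_pair _ _ _ q.1 q.2) /[apply] -[s [s1 s2]].
have inj_s : injective (@map_tuple n _ _ s).
  by move=> v1 v2 /(congr1 val) /(inj_map (@perm_inj _ s)) /val_inj.
rewrite -(card_imset _ inj_s) subset_leq_card //.
apply/fintype.subsetP => _ /imsetP[w + ->]; rewrite !inE => /andP[/asboolP sq_w /eqP hw].
apply/andP; split; first by apply/asboolP; apply: squarefree_perm.
rewrite /head2 /= !(nth_map ord0) ?size_tuple //; last exact: ltnW.
by rewrite -hw in s1 s2; rewrite s1 s2 -surjective_pairing.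
Qed.

Lemma card_A_head n p q : (1 < n)%N -> p.1 != p.2 -> q.1 != q.2 ->
  #|A_head n p| = #|A_head n q|.
Proof. by move=> n_gt1 hp hq; apply/eqP; rewrite eqn_leq !card_A_head_le. Qed.

Lemma sum_distinct_pairs : (\sum_(p : Sigma * Sigma) (p.1 != p.2))%N = 6.
Proof.
rewrite -(pair_bigA _ (fun i j : Sigma => nat_of_bool (i != j))) /=.
by rewrite !big_ord_recl !big_ord0.
Qed.

Lemma card_A n p : (1 < n)%N -> p.1 != p.2 -> a n = (6 * #|A_head n p|)%N.
Proof.
move=> n_gt1 hp; rewrite /a -sum1_card.
rewrite (partition_big (fun w : n.-tuple Sigma => head2 w) predT) //=.
rewrite (eq_bigr (fun q => (q.1 != q.2) * #|A_head n p|)%N); last first.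
  move=> q _; rewrite sum1_card; have [eq_q|hq] := eqVneq q.1 q.2.
    rewrite mul0n; apply: eq_card0 => w; apply/negbTE/negP.
    rewrite unfold_in inE => /andP[/asboolP sq_w /eqP hw].
    rewrite -hw /= in eq_q.
    by have := @squarefree_nth_neq _ 0 sq_w; rewrite size_tuple eq_q eqxx => /(_ n_gt1).
  by rewrite /= mul1n -(card_A_head n_gt1 hq hp) cardsE.
by rewrite -big_distrl /= sum_distinct_pairs.
Qed.

Lemma eq_from_take_drop (T : Type) j k (w1 w2 : seq T) : (j <= k)%N ->
  take k w1 = take k w2 -> drop j w1 = drop j w2 -> w1 = w2.
Proof.
move=> le_jk eq_take eq_drop; rewrite -(cat_take_drop k w1) -(cat_take_drop k w2).
by rewrite eq_take -(subnK le_jk) -!drop_drop eq_drop.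
Qed.

Definition as_tuple k (s : seq Sigma) : k.-tuple Sigma := insubd (nseq_tuple k ord0) s.

Lemma val_as_tuple k s : size s = k -> val (as_tuple k s) = s.
Proof. by move=> size_s; rewrite val_insubd size_s eqxx. Qed.

Section Overlap.

Variables m n : nat.
Hypotheses (m_gt1 : (1 < m)%N) (n_gt1 : (1 < n)%N).
Local Notation K := (m + n - 2)%N.

Definition word_prefix (w : K.-tuple Sigma) : m.-tuple Sigma := as_tuple m (take m w).
Definition word_suffix (w : K.-tuple Sigma) : n.-tuple Sigma := as_tuple n (drop (m - 2) w).

Lemma val_word_prefix w : val (word_prefix w) = take m w.
Proof. by rewrite val_as_tuple // size_take size_tuple; case: ltngtP; lia. Qed.

Lemma val_word_suffix w : val (word_suffix w) = drop (m - 2) w.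
Proof. by rewrite val_as_tuple // size_drop size_tuple; lia. Qed.

Lemma card_fiber_word_prefix (u : m.-tuple Sigma) :
  (#|[set w in A K | word_prefix w == u]| <=
   #|A_head n (nth ord0 u (m - 2), nth ord0 u (m - 1))|)%N.
Proof.
rewrite -(card_in_imset (f := word_suffix)); last first.
  move=> w1 w2; rewrite !inE => /andP[_ /eqP hw1] /andP[_ /eqP hw2] /(congr1 val).
  rewrite !val_word_suffix => eq_suf; apply: val_inj.
  apply: (@eq_from_take_drop Sigma _ _ _ _ (leq_subr 2 m) _ eq_suf).
  by rewrite -!val_word_prefix hw1 hw2.
apply/subset_leq_card/fintype.subsetP => _ /imsetP[w + ->].
rewrite !inE => /andP[/asboolP sq_w /eqP <-].
apply/andP; split; first by apply/asboolP; rewrite val_word_suffix; apply: squarefree_drop.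
rewrite /head2 val_word_suffix val_word_prefix !nth_drop !nth_take; try lia.
by rewrite addn0 addn1 -subSn.
Qed.

Lemma card_A_overlap p : p.1 != p.2 -> (a K <= a m * #|A_head n p|)%N.
Proof.
move=> hp; rewrite /a -sum1_card (partition_big word_prefix (mem (A m))) /=; last first.
  by move=> w; rewrite !inE val_word_prefix; exact: squarefree_take.
rewrite -sum_nat_const leq_sum // => u; rewrite inE => /asboolP sq_u.
rewrite sum1_card -cardsE; apply: leq_trans (card_fiber_word_prefix u) _.
rewrite (card_A_head (q := p) n_gt1 _ hp) //.
by rewrite /= -(subnSK m_gt1) squarefree_nth_neq // size_tuple; lia.
Qed.

End Overlap.

Lemma a_submult m n : (1 < m)%N -> (1 < n)%N -> (6 * a (m + n - 2) <= a m * a n)%N.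
Proof.
move=> m_gt1 n_gt1; pose p : Sigma * Sigma := (ord0, ord_max).
by rewrite (@card_A n p) // mulnCA leq_mul2l card_A_overlap ?orbT.
Qed.

Local Open Scope classical_set_scope.
Local Open Scope ring_scope.

Lemma submult_exprn (R : numDomainType) (f : nat -> R) d q :
  (forall k, 0 <= f k) -> (forall k l, f (k + l)%N <= f k * f l) ->
  (0 < q)%N -> f (q * d)%N <= f d ^+ q.
Proof.
move=> f_ge0 f_submult; elim: q => [//|[|q] IHq _]; first by rewrite mul1n expr1.
rewrite mulSn exprS; apply: le_trans (f_submult _ _) _.
by rewrite ler_wpM2l // IHq.
Qed.

Lemma powR_invnK (R : realType) (x : R) k : 0 <= x -> (0 < k)%N ->
  (x `^ (k%:R)^-1) ^+ k = x.
Proof.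
move=> x_ge0 k_gt0; rewrite -powR_mulrn ?powR_ge0 // -powRrM mulVf ?powRr1 //.
by rewrite pnatr_eq0 -lt0n.
Qed.

Lemma root_limit_le (R : realType) (u : nat -> R) (C x s : R) (d e : nat) :
  (0 < d)%N -> 0 <= x -> (forall k, 0 <= u k) ->
  (forall q, (0 < q)%N -> u (q * d + e)%N <= C * x ^+ q) ->
  (fun k => u k `^ (k%:R)^-1) @ \oo --> s -> s <= x `^ (d%:R)^-1.
Proof.
move=> d_gt0 x_ge0 u_ge0 u_bound lim_s; rewrite leNgt; apply/negP.
set c := x `^ _ => lt_c_s; have c_ge0 : 0 <= c by apply: powR_ge0.
pose t := (c + s) / 2; have ct : c < t by rewrite /t; lra.
have ts : t < s by rewrite /t; lra.
have t_gt0 : 0 < t by lra.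
have [N _ u_gt] : \forall k \near \oo, t ^+ k < u k.
  have [N _ HN] := cvgr_gt s lim_s t ts; exists N.+1 => // k /= Nk.
  have k_gt0 : (0 < k)%N by lia.
  rewrite -[u k](powR_invnK (u_ge0 k) k_gt0) ltrXn2r -?lt0n ?(ltW t_gt0) //.
  by apply: (HN k) => /=; lia.
pose z := x / t ^+ d.
have td_gt0 : 0 < t ^+ d by rewrite exprn_gt0.
have z_ge0 : 0 <= z by rewrite divr_ge0 // ltW.
have z_lt1 : `|z| < 1.
  by rewrite ger0_norm // ltr_pdivrMr // mul1r -(powR_invnK x_ge0 d_gt0) ltrXn2r // -lt0n.
have [M _ geo_lt] := cvgr_lt 0 (cvg_geometric C z_lt1) _ (exprn_gt0 e t_gt0).
pose q := (maxn N M).+1.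
have Nq : (N <= q * d + e)%N by rewrite /q; nia.
have lt_te : t ^+ e < C * z ^+ q.
  rewrite -(ltr_pM2r (exprn_gt0 q td_gt0)) -mulrA -exprMn divfK ?gt_eqF //.
  rewrite -exprM -exprD addnC mulnC.
  by apply: lt_le_trans (u_gt _ Nq) (u_bound _ _).
have /= : (M <= q)%N by rewrite /q; lia.
by move/geo_lt => /=; lra.
Qed.

Theorem mainTheorem1 (R : realType) :
  (forall m n : nat, (2 <= m)%N -> (2 <= n)%N ->
     (a (m + n - 2))%:R <= (a m)%:R * (a n)%:R / 6 :> R)
  /\
  (forall s : R,
     (fun k : nat => (a k)%:R `^ (k%:R)^-1 : R) @ \oo --> s ->
     forall n : nat, (3 <= n)%N ->
       s <= ((a n)%:R / 6) `^ ((n - 2)%:R)^-1).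
Proof.
have a_submultR m n : (2 <= m)%N -> (2 <= n)%N ->
    (a (m + n - 2))%:R <= (a m)%:R * (a n)%:R / 6 :> R.
  by move=> m_ge2 n_ge2; rewrite ler_pdivlMr // -!natrM ler_nat mulnC a_submult.
split=> // s lim_s n n_ge3.
pose b k : R := (a (k + 2))%:R / 6.
have b_ge0 k : 0 <= b k by rewrite /b divr_ge0.
have b_submult k l : b (k + l) <= b k * b l.
  have := a_submultR (k + 2)%N (l + 2)%N (leq_addl _ _) (leq_addl _ _).
  by rewrite (_ : (k + 2 + (l + 2) - 2 = k + l + 2)%N) /b; [lra | lia].
have -> : (a n)%:R / 6 = b (n - 2)%N by rewrite /b subnK // ltnW.
apply: (@root_limit_le _ (fun k => (a k)%:R) 6 _ _ _ 2) lim_s => //.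
- by rewrite subn_gt0.
- move=> q q_gt0; have := submult_exprn (n - 2) b_ge0 b_submult q_gt0.
  by rewrite /b ler_pdivrMr // mulrC.
Qed.
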